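(* For every positive integer $n$, the set $I^n_{\mathfrak U}=\{\operatorname{is}(X): X\in\mathfrak U,\ |X|=n\}$ is an open dense subset of the space of isometry types of ultrametric spaces $(X,d)$ with $|X|\leqslant n$, endowed with the Gromov–Hausdorff metric.
   Context: $\operatorname{Sp}(X)=\{d(x,y):x\neq y\}$; $\mathfrak U$ is the class of finite ultrametric spaces $X$ with $|\operatorname{Sp}(X)|=|X|-1$. $\operatorname{is}(X)$ denotes the isometry type of $X$. For bounded metric spaces $X,Y$ and $\varepsilon>0$, $d_{GH}(\operatorname{is}(X),\operatorname{is}(Y))<\varepsilon$ iff there is a metric space $(Z,d_Z)$ with subspaces $X',Y'$ isometric to $X,Y$ such that each point of $X'$ lies at $d_Z$-distance $<\varepsilon$ from some point of $Y'$ and each point of $Y'$ lies at distance $<\varepsilon$ from some point of $X'$; $d_{GH}$ is a metric on isometry types of compact (in particular finite) metric spaces. *)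

From HB Require Import structures.
From mathcomp Require Import all_boot all_order all_algebra.
From mathcomp Require Import reals.
Set Implicit Arguments. Unset Strict Implicit. Unset Printing Implicit Defensive.
Import Order.TTheory GRing.Theory Num.Theory.
Local Open Scope ring_scope.

Section Defs.
Variable R : realType.

Definition is_metric (Z : Type) (d : Z -> Z -> R) : Prop :=
  (forall x y, 0 <= d x y) /\
  (forall x y, d x y = 0 <-> x = y) /\
  (forall x y, d x y = d y x) /\
  (forall x y z, d x z <= d x y + d y z).

Definition is_ultrametric (T : finType) (d : T -> T -> R) : Prop :=
  is_metric d /\ (forall x y z, d x z <= Num.max (d x y) (d y z)).

Definition spectrum (T : finType) (d : T -> T -> R) : seq R :=
  undup [seq d p.1 p.2 | p <- enum [pred p : T * T | p.1 != p.2]].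

Definition in_frakU (T : finType) (d : T -> T -> R) : Prop :=
  is_ultrametric d /\ size (spectrum d) = (#|T| - 1)%N.

Definition isometric (T1 T2 : finType) (d1 : T1 -> T1 -> R)
  (d2 : T2 -> T2 -> R) : Prop :=
  exists f : T1 -> T2, bijective f /\ forall x y, d2 (f x) (f y) = d1 x y.

(* d_GH(is(X), is(Y)) < eps, as characterized in the paper. *)
Definition GH_lt (T1 T2 : finType) (d1 : T1 -> T1 -> R)
  (d2 : T2 -> T2 -> R) (eps : R) : Prop :=
  exists (Z : Type) (dZ : Z -> Z -> R) (f : T1 -> Z) (g : T2 -> Z),
    [/\ is_metric dZ,
        (forall x x', dZ (f x) (f x') = d1 x x'),
        (forall y y', dZ (g y) (g y') = d2 y y'),
        (forall x, exists y, dZ (f x) (g y) < eps) &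
        (forall y, exists x, dZ (f x) (g y) < eps)].

Definition in_InU (n : nat) (T : finType) (d : T -> T -> R) : Prop :=
  exists (T' : finType) (d' : T' -> T' -> R),
    [/\ in_frakU d', #|T'| = n & isometric d' d].

End Defs.

From HB Require Import structures.
From mathcomp Require Import all_boot all_order all_algebra.
From mathcomp Require Import reals.
From mathcomp Require Import zify lra.
Import Order.TTheory GRing.Theory Num.Theory.
Local Open Scope ring_scope.
Set Implicit Arguments. Unset Strict Implicit. Unset Printing Implicit Defensive.

(* Openness: the distinct distances of X in U, together with 0, are separated by
   some gap g > 0.  If d_GH(X, Y) < g/4, choosing for each point of X a point of
   Y within g/4 gives a map of distortion < g/2; it is injective, so |Y| = |X|,
   and it sends the |X| - 1 distances of X to pairwise distinct distances of Y.
   Since a finite ultrametric space Y has at most |Y| - 1 distances, Y is in U.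

   Density: list the points of Y as y_0, ..., y_(n-1) (repetitions allowed) and
   hang each y_k below a nearest earlier point y_(p k), with weight
   d(y_k, y_(p k)).  In this rooted tree the distance of y_i and y_j is the
   largest weight of an edge separating them.  Raising all weights slightly so
   that they become positive and pairwise distinct produces a nearby
   ultrametric space on n points with n - 1 distinct distances. *)

Section UltrametricGH.
Variable R : realType.

Lemma spectrumP (T : finType) (d : T -> T -> R) v :
  reflect (exists x y, x != y /\ v = d x y) (v \in spectrum d).
Proof.
rewrite /spectrum mem_undup; apply: (iffP mapP).
  by case=> [[x y]]; rewrite mem_enum /= => xy ->; exists x, y.
by case=> x [y [xy ->]]; exists (x, y); rewrite ?mem_enum.
Qed.

Section Ultrametric.
Variables (T : finType) (d : T -> T -> R).
Hypothesis ud : is_ultrametric d.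

Definition spectrum_on (A : {set T}) : seq R :=
  undup [seq d xy.1 xy.2 | xy <- enum [pred xy : T * T |
    [&& xy.1 \in A, xy.2 \in A & xy.1 != xy.2]]].

Lemma spectrum_onP (A : {set T}) v :
  reflect (exists x y, [/\ x \in A, y \in A, x != y & v = d x y])
          (v \in spectrum_on A).
Proof.
rewrite /spectrum_on mem_undup; apply: (iffP mapP).
  by case=> [[x y]]; rewrite mem_enum => /and3P[xA yA xy] ->; exists x, y.
by case=> x [y [xA yA xy ->]]; exists (x, y); rewrite ?mem_enum //= inE /= xA yA.
Qed.

Lemma spectrum_on_setT : spectrum_on [set: T] = spectrum d.
Proof.
rewrite /spectrum_on /spectrum; congr (undup (map _ _)).
by apply: eq_enum => xy; rewrite !inE.
Qed.

Lemma ultra_lt_eq x y z : d x y < d x z -> d x z = d y z.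
Proof.
have [[_ [_ [dC _]]] dU] := ud => lt_xy_xz.
apply/eqP; rewrite eq_le; apply/andP; split.
  by have := dU x y z; rewrite le_max leNgt lt_xy_xz.
by apply: le_trans (dU y x z) _; rewrite dC ge_max (ltW lt_xy_xz) lexx.
Qed.

Lemma size_spectrum_on (A : {set T}) : (size (spectrum_on A) <= #|A|.-1)%N.
Proof.
have [[_ [_ [dC _]]] _] := ud.
have [m lt_Am] := ubnP #|A|; elim: m A lt_Am => // m IH A lt_Am.
have [/card_le1P A_le1 | A_gt1] := leqP #|A| 1.
  case E: (spectrum_on A) => [//|v s].
  have /spectrum_onP[x [y [xA yA xy _]]] : v \in spectrum_on A by rewrite E mem_head.
  by move: yA; rewrite (A_le1 x xA) inE eq_sym (negbTE xy).
have [x xA] : exists x, x \in A by apply/card_gt0P; rewrite ltnW.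
pose A' := A :\ x.
have cardA : #|A| = #|A'|.+1 by rewrite (cardsD1 x A) xA.
have [y0 y0A'] : exists y0, y0 \in A' by apply/card_gt0P; rewrite -ltnS -cardA.
have [y yA' y_min] := arg_minP (d x) y0A'.
have near_x z : z \in A' -> d x z = d x y \/ d x z \in spectrum_on A'.
  move=> zA'; have [->|ne] := eqVneq (d x z) (d x y); first by left.
  right; apply/spectrum_onP; exists y, z; split=> //.
    by apply/eqP=> yz; rewrite yz eqxx in ne.
  by apply: ultra_lt_eq; rewrite lt_neqAle eq_sym ne y_min.
have sub : {subset spectrum_on A <= d x y :: spectrum_on A'}.
  move=> _ /spectrum_onP[a [b [aA bA ab ->]]]; rewrite inE.
  have [ax|ax] := eqVneq a x; have [bx|bx] := eqVneq b x.
  - by rewrite ax bx eqxx in ab.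
  - by rewrite ax; case: (near_x b) => [|->|->]; rewrite ?eqxx ?orbT // !inE bx.
  - by rewrite bx dC; case: (near_x a) => [|->|->]; rewrite ?eqxx ?orbT // !inE ax.
  - by apply/orP; right; apply/spectrum_onP; exists a, b; rewrite !inE ax bx.
have := @uniq_leq_size _ (spectrum_on A) _ (undup_uniq _) sub; have := IH A'.
rewrite cardA in lt_Am A_gt1 *; move=> /(_ lt_Am) /=; lia.
Qed.

Lemma ultrametric_spectrum_size : (size (spectrum d) <= #|T| - 1)%N.
Proof. by rewrite -spectrum_on_setT subn1 -cardsT size_spectrum_on. Qed.

End Ultrametric.

Lemma dist_gap (T : finType) (d : T -> T -> R) :
  exists2 g : R, 0 < g &
    forall x x' y y', d x x' != d y y' -> g <= `|d x x' - d y y'|.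
Proof.
pose gap (q : (T * T) * (T * T)) := `|d q.1.1 q.1.2 - d q.2.1 q.2.2|.
exists (\big[Num.min/1]_(q | d q.1.1 q.1.2 != d q.2.1 q.2.2) gap q).
  by apply: lt_bigmin => // q ne; rewrite normr_gt0 subr_eq0.
by move=> x x' y y' ne; apply: (bigmin_le_cond 1 (j := ((x, x'), (y, y')))).
Qed.

Lemma size_le_of_separated_near (s t : seq R) (g : R) : uniq s ->
  {in s &, forall a b, a != b -> g <= `|a - b|} ->
  {in s, forall a, exists2 b, b \in t & `|a - b| < g / 2} ->
  (size s <= size t)%N.
Proof.
move=> s_uniq s_sep s_near.
pose rho b := head 0 [seq a <- s | `|a - b| < g / 2].
suff /(uniq_leq_size s_uniq) : {subset s <= map rho t} by rewrite size_map.
move=> a a_s; have [b b_t ab] := s_near a a_s; apply/mapP; exists b => //.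
rewrite /rho; case E: [seq _ <- s | _] => [|a' s'].
  by have := mem_filter (fun a => `|a - b| < g / 2) a s; rewrite E a_s ab.
have : a' \in [seq a <- s | `|a - b| < g / 2] by rewrite E mem_head.
rewrite mem_filter => /andP[a'b a'_s] /=; apply/eqP; apply: contraT => ne.
have := s_sep _ _ a_s a'_s ne; have := ler_distD b a a'.
rewrite distrC in a'b; lra.
Qed.

Lemma GH_lt_near_map (T T' : finType) (d : T -> T -> R) (d' : T' -> T' -> R) eps :
  GH_lt d d' eps ->
  exists phi : T -> T', forall x x', `|d' (phi x) (phi x') - d x x'| < 2 * eps.
Proof.
case=> Z [dZ [f [g [[_ [_ [dZC dZtr]]] df dg near _]]]].
exists (fun x => xchoose (near x)) => x x'.
have := xchooseP (near x); have := xchooseP (near x').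
set y := xchoose (near x); set y' := xchoose (near x') => near_x' near_x.
rewrite -df -dg ltr_norml; apply/andP; split.
  have := dZtr (f x) (g y) (f x'); have := dZtr (g y) (g y') (f x').
  rewrite (dZC (g y') (f x')); lra.
have := dZtr (g y) (f x) (g y'); have := dZtr (f x) (f x') (g y').
rewrite (dZC (g y) (f x)); lra.
Qed.

Lemma frakU_GH_stable (T : finType) (d : T -> T -> R) : in_frakU d ->
  exists2 eps : R, 0 < eps & forall (T' : finType) (d' : T' -> T' -> R),
    is_ultrametric d' -> (#|T'| <= #|T|)%N -> GH_lt d d' eps ->
    in_frakU d' /\ #|T'| = #|T|.
Proof.
case=> ud size_sp; have [[d_ge0 [d_eq0 _]] _] := ud.
have [g g_gt0 g_gap] := dist_gap d.
exists (g / 4) => [|T' d' ud' le_T'T /GH_lt_near_map[phi phi_near]].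
  by rewrite divr_gt0.
have [[_ [d'_eq0 _]] _] := ud'.
have g_le x x' : x != x' -> g <= d x x'.
  move=> ne; have := g_gap x x' x x; rewrite (d_eq0 x x).2 // subr0 ger0_norm //.
  by apply; apply/eqP => /d_eq0/eqP; rewrite (negbTE ne).
have phi_inj : injective phi.
  move=> x x' e; apply/eqP; apply: contraT => ne.
  have := g_le _ _ ne; have := phi_near x x'.
  rewrite e (d'_eq0 _ _).2 // sub0r normrN ger0_norm //; lra.
have card_T' : #|T'| = #|T|.
  by apply/eqP; rewrite eqn_leq le_T'T (leq_card _ phi_inj).
split=> //; split=> //; apply/eqP.
rewrite eqn_leq ultrametric_spectrum_size //= card_T' -size_sp.
apply: (size_le_of_separated_near (g := g)); first exact: undup_uniq.
  by move=> _ _ /spectrumP[x [x' [_ ->]]] /spectrumP[y [y' [_ ->]]]; apply: g_gap.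
move=> _ /spectrumP[x [x' [ne ->]]]; exists (d' (phi x) (phi x')).
  by apply/spectrumP; exists (phi x), (phi x'); rewrite (inj_eq phi_inj).
by rewrite distrC; have := phi_near x x'; lra.
Qed.

Section ParentTree.
Variables (n : nat) (p : 'I_n -> 'I_n).
Hypothesis p_le : forall k, (p k <= k)%N.
Hypothesis p_lt : forall k : 'I_n, (0 < k)%N -> (p k < k)%N.

Lemma fconnect_parent_le (i k : 'I_n) : fconnect p i k -> (k <= i)%N.
Proof.
move/iter_findex <-; elim: (findex p i k) => //= t IH.
exact: leq_trans (p_le _) IH.
Qed.

(* [fconnect p i k] says that k is an ancestor of i; the edge from k to p k
   lies between i and j iff k is an ancestor of exactly one of them. *)
Definition tree_dist (w : 'I_n -> R) (i j : 'I_n) : R :=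
  \big[Num.max/0]_(k | fconnect p i k != fconnect p j k) w k.

Lemma tree_dist_ge0 w (i j : 'I_n) : 0 <= tree_dist w i j.
Proof. exact: bigmax_ge_id. Qed.

Lemma tree_distxx w (i : 'I_n) : tree_dist w i i = 0.
Proof. by apply: big_pred0 => k; rewrite eqxx. Qed.

Lemma tree_distC w (i j : 'I_n) : tree_dist w i j = tree_dist w j i.
Proof. by apply: eq_bigl => k; rewrite eq_sym. Qed.

Lemma tree_dist_ultra w (i j l : 'I_n) :
  tree_dist w i l <= Num.max (tree_dist w i j) (tree_dist w j l).
Proof.
apply: bigmax_le => [|k]; first by rewrite le_max tree_dist_ge0.
have [e sep | ne _] := eqVneq (fconnect p i k) (fconnect p j k).
  by rewrite le_max; apply/orP; right; apply: le_bigmax_cond; rewrite -e.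
by rewrite le_max; apply/orP; left; apply: le_bigmax_cond.
Qed.

Lemma tree_dist_parent_step w (i j : 'I_n) :
  (i < j)%N -> tree_dist w j i = Num.max (w j) (tree_dist w (p j) i).
Proof.
move=> lt_ij; have j_gt0 : (0 < j)%N := leq_ltn_trans (leq0n i) lt_ij.
have not_anc (k : 'I_n) : (k < j)%N -> fconnect p k j = false.
  by move=> lt_kj; apply/negP => /fconnect_parent_le; rewrite leqNgt lt_kj.
rewrite /tree_dist (bigmaxD1 j) ?connect0 ?not_anc //; congr Num.max.
apply: eq_bigl => k; have [->|ne_kj] := eqVneq k j.
  by rewrite andbF !not_anc ?p_lt.
by rewrite andbT (fconnect_eqVf p j k) (eq_sym j k) (negbTE ne_kj).
Qed.

Lemma tree_dist_parent w (k : 'I_n) : (forall k, 0 <= w k) -> (0 < k)%N ->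
  tree_dist w k (p k) = w k.
Proof.
move=> w_ge0 k_gt0.
by rewrite tree_dist_parent_step ?p_lt // tree_distxx; apply/max_idPl.
Qed.

Lemma tree_dist_gt0 w (i j : 'I_n) : (forall k, 0 < w k) -> i != j -> 0 < tree_dist w i j.
Proof.
move=> w_gt0 ne; have [lt|gt|/val_inj eq] := ltngtP i j.
- by rewrite tree_distC tree_dist_parent_step // lt_max w_gt0.
- by rewrite tree_dist_parent_step // lt_max w_gt0.
- by rewrite eq eqxx in ne.
Qed.

Lemma tree_dist_le w w' (i j : 'I_n) :
  (forall k, w k <= w' k) -> tree_dist w i j <= tree_dist w' i j.
Proof. by move=> le_ww'; apply: le_bigmax2. Qed.

Lemma tree_dist_le_add w w' c (i j : 'I_n) : 0 <= c -> (forall k, w' k <= w k + c) ->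
  tree_dist w' i j <= tree_dist w i j + c.
Proof.
move=> c_ge0 le_w'w; apply: bigmax_le => [|k sep].
  by rewrite addr_ge0 ?tree_dist_ge0.
by apply: le_trans (le_w'w k) _; rewrite lerD2r le_bigmax_cond.
Qed.

Lemma tree_dist_ultrametric w : (forall k, 0 < w k) -> is_ultrametric (tree_dist w).
Proof.
move=> w_gt0; split; last exact: tree_dist_ultra.
split; first exact: tree_dist_ge0.
split; [|split; first exact: tree_distC].
  move=> i j; split=> [|->]; last exact: tree_distxx.
  by apply: contra_eq => ne; apply: lt0r_neq0; apply: tree_dist_gt0.
move=> i j l; apply: le_trans (tree_dist_ultra _ _ j _) _.
by rewrite ge_max lerDl lerDr !tree_dist_ge0.
Qed.

Variable D : 'I_n -> 'I_n -> R.
Hypotheses (D_xx : forall i, D i i = 0) (DC : forall i j, D i j = D j i).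
Hypothesis D_ultra : forall i j l, D i l <= Num.max (D i j) (D j l).
Hypothesis p_min : forall k j : 'I_n, (j < k)%N -> D k (p k) <= D k j.

Lemma ultra_parent_split (k i : 'I_n) :
  (i < k)%N -> D k i = Num.max (D k (p k)) (D (p k) i).
Proof.
move=> lt_ik; have k_gt0 : (0 < k)%N := leq_ltn_trans (leq0n i) lt_ik.
apply/eqP; rewrite eq_le D_ultra ge_max p_min //=.
apply: le_trans (D_ultra (p k) k i) _.
by rewrite ge_max (DC (p k)) p_min // lexx.
Qed.

Lemma tree_dist_parent_weights (i j : 'I_n) :
  tree_dist (fun k => D k (p k)) i j = D i j.
Proof.
wlog le_ji : i j / (j <= i)%N.
  by move=> H; case: (leqP j i) => [/H //|/ltnW/H]; rewrite tree_distC DC.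
have [m lt_im] := ubnP i; elim: m i j le_ji lt_im => // m IH i j le_ji lt_im.
have [->|ne] := eqVneq j i; first by rewrite tree_distxx D_xx.
have lt_ji : (j < i)%N by rewrite ltn_neqAle le_ji andbT val_eqE.
have lt_pi := p_lt (leq_ltn_trans (leq0n j) lt_ji).
rewrite tree_dist_parent_step // (ultra_parent_split lt_ji); congr (Num.max _ _).
have [le_jpi|lt_pij] := leqP j (p i); first by apply: IH => //; lia.
by rewrite tree_distC DC; apply: IH; lia.
Qed.

End ParentTree.

Lemma tree_dist_frakU (n : nat) (p : 'I_n.+1 -> 'I_n.+1) (w : 'I_n.+1 -> R) :
  (forall k, (p k <= k)%N) -> (forall k : 'I_n.+1, (0 < k)%N -> (p k < k)%N) ->
  injective w -> (forall k, 0 < w k) -> in_frakU (tree_dist p w).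
Proof.
move=> p_le p_lt w_inj w_gt0; have ultra := tree_dist_ultrametric p_le p_lt w_gt0.
split=> //; apply/eqP; rewrite eqn_leq ultrametric_spectrum_size //.
rewrite card_ord subSS subn0.
have w_uniq : uniq [seq w k | k in [set~ ord0]].
  by rewrite (map_inj_uniq w_inj) enum_uniq.
have w_sub : {subset [seq w k | k in [set~ ord0]] <= spectrum (tree_dist p w)}.
  move=> v /mapP[k]; rewrite mem_enum !inE -val_eqE -lt0n => k_gt0 ->.
  apply/spectrumP; exists k, (p k); split.
    by rewrite -val_eqE neq_ltn p_lt ?orbT.
  by rewrite tree_dist_parent // => j; apply: ltW.
by have := uniq_leq_size w_uniq w_sub; rewrite size_map -cardE cardsC1 card_ord.
Qed.

Lemma exists_nearest_parent (n : nat) (D : 'I_n.+1 -> 'I_n.+1 -> R) :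
  exists p : 'I_n.+1 -> 'I_n.+1, [/\ forall k, (p k <= k)%N,
    forall k : 'I_n.+1, (0 < k)%N -> (p k < k)%N &
    forall k j : 'I_n.+1, (j < k)%N -> D k (p k) <= D k j].
Proof.
pose p (k : 'I_n.+1) := [arg min_(j < ord0 | (j < k)%N) D k j]%O.
have p_spec (k : 'I_n.+1) : (0 < k)%N ->
    (p k < k)%N /\ forall j : 'I_n.+1, (j < k)%N -> D k (p k) <= D k j.
  move=> k_gt0; rewrite /p.
  by case: (@arg_minP _ _ _ ord0 (fun j : 'I_n.+1 => (j < k)%N) (D k)).
exists p; split=> [k|k /p_spec[]//|k j lt_jk].
  have [k0|/p_spec[/ltnW]//] := posnP k.
  (* for k = 0 the constraint is empty and the arg min is its default ord0 *)
  by rewrite /p /Order.arg_min /extremum; case: pickP => [j /andP[]|_]; rewrite k0.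
exact: (p_spec k (leq_ltn_trans (leq0n j) lt_jk)).2.
Qed.

Lemma exists_small_notin (s : seq R) (c : R) : 0 < c ->
  exists2 x, 0 < x <= c & x \notin s.
Proof.
move=> c_gt0; pose m := \big[Num.min/c]_(a <- s | 0 < a) a.
have m_gt0 : 0 < m by apply: lt_bigmin.
have m_le : m <= c := bigmin_le_id _ _ _ _.
exists (m / 2); first by apply/andP; split; lra.
apply/negP => ms; have := ge_bigmin_seq c (m / 2) (fun a => 0 < a) id ms.
rewrite -/m; lra.
Qed.

Lemma exists_injective_perturbation (m : nat) (r : 'I_m -> R) (c : R) : 0 < c ->
  exists r' : 'I_m -> R, injective r' /\ forall k, r k < r' k <= r k + c.
Proof.
move=> c_gt0; have m1_gt0 : 0 < m.+1%:R :> R by rewrite ltr0n.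
pose slope (a b : 'I_m) := (r a - r b) / (b%:R - a%:R).
pose s := [seq slope a b | a <- enum 'I_m, b <- enum 'I_m].
have [e /andP[e_gt0 e_le] e_notin] := exists_small_notin s (divr_gt0 c_gt0 m1_gt0).
exists (fun k => r k + e * (k%:R + 1)); split.
  move=> a b eq_ab; apply/eqP; apply: contraT => ne.
  have nz : b%:R - a%:R != 0 :> R.
    by rewrite subr_eq0 eqr_nat; apply: contra ne => /eqP/val_inj->.
  rewrite !mulrDr !mulr1 in eq_ab.
  have e_eq : e = slope a b by apply/(mulIf nz); rewrite divfK // mulrBr; lra.
  by move: e_notin; rewrite e_eq (allpairs_f slope) ?mem_enum.
move=> k; have k1_gt0 : 0 < k%:R + 1 :> R by rewrite ltr_wpDl.
apply/andP; split; first by rewrite ltrDl mulr_gt0.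
rewrite lerD2l -(divfK (lt0r_neq0 m1_gt0) c).
apply: ler_pM (ltW e_gt0) (ltW k1_gt0) e_le _.
by rewrite -addn1 natrD lerD2r ler_nat ltnW.
Qed.

Definition glue_dist (T1 T2 : Type) (d1 : T1 -> T1 -> R) (d2 : T2 -> T2 -> R)
    (phi : T1 -> T2) (c : R) (a b : T1 + T2) : R :=
  match a, b with
  | inl x, inl x' => d1 x x'
  | inr y, inr y' => d2 y y'
  | inl x, inr y | inr y, inl x => d2 (phi x) y + c
  end.

Lemma glue_dist_metric (T1 T2 : Type) (d1 : T1 -> T1 -> R) (d2 : T2 -> T2 -> R)
    (phi : T1 -> T2) (c : R) :
  is_metric d1 -> is_metric d2 -> 0 < c ->
  (forall x x', d2 (phi x) (phi x') <= d1 x x' <= d2 (phi x) (phi x') + c) ->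
  is_metric (glue_dist d1 d2 phi c).
Proof.
move=> [d1_ge0 [d1_eq0 [d1C d1tr]]] [d2_ge0 [d2_eq0 [d2C d2tr]]] c_gt0 phi_near.
have d2_gt0 x y : 0 < d2 (phi x) y + c by rewrite ltr_wpDl.
split; [|split; [|split]].
- by case=> [x|y] [x'|y'] /=; rewrite ?d1_ge0 ?d2_ge0 ?ltW ?d2_gt0.
- case=> [x|y] [x'|y'] /=; split=> //.
  + by move/d1_eq0 ->.
  + by case=> <-; apply/d1_eq0.
  + by move=> h; have := d2_gt0 x y'; rewrite h ltxx.
  + by move=> h; have := d2_gt0 x' y; rewrite h ltxx.
  + by move/d2_eq0 ->.
  + by case=> <-; apply/d2_eq0.
- by case=> [x|y] [x'|y'] /=; rewrite (d1C, d2C).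
case=> [x|y] [x'|y'] [x''|y''] /=.
all: first [exact: d1tr | exact: d2tr | idtac].
- have := d2tr (phi x) (phi x') y''; have /andP[] := phi_near x x'; lra.
- have := d2tr (phi x) y' (phi x''); have /andP[] := phi_near x x''.
  rewrite (d2C y' (phi x'')); lra.
- have := d2tr (phi x) y' y''; lra.
- have := d2tr (phi x'') (phi x') y; have /andP[] := phi_near x' x''.
  rewrite (d2C (phi x'') (phi x')); lra.
- have := d2tr y (phi x') y''; rewrite (d2C y (phi x')); lra.
- have := d2tr (phi x'') y' y; rewrite (d2C y' y); lra.
Qed.

Lemma GH_lt_of_approx (T1 T2 : finType) (d1 : T1 -> T1 -> R) (d2 : T2 -> T2 -> R)
    (phi : T1 -> T2) (psi : T2 -> T1) (c eps : R) :
  is_metric d1 -> is_metric d2 -> cancel psi phi -> 0 < c -> c < eps ->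
  (forall x x', d2 (phi x) (phi x') <= d1 x x' <= d2 (phi x) (phi x') + c) ->
  GH_lt d1 d2 eps.
Proof.
move=> m1 m2 psiK c_gt0 lt_c_eps phi_near.
have [_ [d2_eq0 _]] := m2.
exists (T1 + T2)%type, (glue_dist d1 d2 phi c), inl, inr.
split=> //; first exact: glue_dist_metric.
- by move=> x; exists (phi x); rewrite /= (d2_eq0 _ _).2 ?add0r.
- by move=> y; exists (psi y); rewrite /= psiK (d2_eq0 _ _).2 ?add0r.
Qed.

Lemma GH_lt_isometric (T0 T T' : finType) (d0 : T0 -> T0 -> R) (d : T -> T -> R)
    (d' : T' -> T' -> R) eps :
  isometric d0 d -> GH_lt d d' eps -> GH_lt d0 d' eps.
Proof.
case=> f [[g _ gK] df] [Z [dZ [i [j [mZ di dj near near']]]]].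
exists Z, dZ, (i \o f), j; split=> // [x x'|x|y] /=.
- by rewrite di df.
- exact: near (f x).
- by have [x] := near' y; exists (g x); rewrite gK.
Qed.

Lemma in_InU_of_frakU (n : nat) (T : finType) (d : T -> T -> R) :
  in_frakU d -> #|T| = n -> in_InU n d.
Proof. by exists T, d; split=> //; exists id; split=> //; exists id. Qed.

Lemma frakU_dense (Y : finType) (dY : Y -> Y -> R) (n : nat) (eps : R) :
  is_ultrametric dY -> (0 < #|Y| <= n.+1)%N -> 0 < eps ->
  exists dX : 'I_n.+1 -> 'I_n.+1 -> R, in_frakU dX /\ GH_lt dX dY eps.
Proof.
move=> udY /andP[/card_gt0P[y0 _] Y_le] eps_gt0.
have [[dY_ge0 [dY_eq0 [dYC _]]] dY_ultra] := udY.
pose phi (i : 'I_n.+1) := nth y0 (enum Y) i.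
pose psi (y : Y) : 'I_n.+1 := inord (index y (enum Y)).
have psiK : cancel psi phi.
  move=> y; rewrite /phi /psi inordK ?nth_index ?mem_enum //.
  by apply: leq_trans Y_le; rewrite cardE index_mem mem_enum.
pose D (i j : 'I_n.+1) := dY (phi i) (phi j).
have [p [p_le p_lt p_min]] := exists_nearest_parent D.
have D_tree i j : tree_dist p (fun k => D k (p k)) i j = D i j.
  apply: tree_dist_parent_weights => // [{}i|{}i {}j|{}i {}j l]; rewrite /D.
  - exact/dY_eq0.
  - exact: dYC.
  - exact: dY_ultra.
have half_gt0 : 0 < eps / 2 by rewrite divr_gt0.
have [r' [r'_inj r'_near]] := exists_injective_perturbation (fun k => D k (p k)) half_gt0.
have r'_gt0 k : 0 < r' k.
  by have /andP[+ _] := r'_near k; apply: le_lt_trans; apply: dY_ge0.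
have near i j : D i j <= tree_dist p r' i j <= D i j + eps / 2.
  rewrite -D_tree; apply/andP; split.
    by apply: tree_dist_le => k; have /andP[/ltW] := r'_near k.
  by apply: tree_dist_le_add => [|k]; [exact: ltW | have /andP[] := r'_near k].
have UX := tree_dist_frakU p_le p_lt r'_inj r'_gt0.
exists (tree_dist p r'); split=> //.
apply: (GH_lt_of_approx (phi := phi) (psi := psi) (c := eps / 2) _ udY.1) => //.
  exact: UX.1.1.
lra.
Qed.

End UltrametricGH.

Theorem mainTheorem17 (R : realType) (n : nat) : (0 < n)%N ->
  (forall (T : finType) (d : T -> T -> R),
      in_InU n d ->
      exists2 eps : R, 0 < eps &
        forall (T' : finType) (d' : T' -> T' -> R),
          is_ultrametric d' -> (0 < #|T'| <= n)%N ->
          GH_lt d d' eps -> in_InU n d')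
  /\
  (forall (T' : finType) (d' : T' -> T' -> R),
      is_ultrametric d' -> (0 < #|T'| <= n)%N ->
      forall eps : R, 0 < eps ->
      exists (T : finType) (d : T -> T -> R),
        in_InU n d /\ GH_lt d d' eps).
Proof.
move=> n_gt0; split.
  move=> T d [T0 [d0 [U0 <- iso]]].
  have [eps eps_gt0 stable] := frakU_GH_stable U0.
  exists eps => // T' d' ud' /andP[_ le_T'] /(GH_lt_isometric iso) close.
  have [U' card_T'] := stable T' d' ud' le_T' close.
  exact: in_InU_of_frakU U' card_T'.
move=> Y dY udY; case: n n_gt0 => // n _ card_Y eps eps_gt0.
have [dX [UX close]] := frakU_dense udY card_Y eps_gt0.
by exists 'I_n.+1, dX; split=> //; apply: in_InU_of_frakU UX (card_ord _).
Qed.
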